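(* For $n,k\ge0$: if $n\equiv 2k+1\pmod 3$ and $n\ge 2k+1$, then with $m=(n-2k-1)/3$, \[ b_{n,k}=\binom{n+1}{m}-3\binom{n}{m-1}; \] otherwise $b_{n,k}=0$.
   Context: The numbers $b_{n,k}$ ($n,k\ge0$) are defined together with $a_{n,k}$ by $a_{0,0}=1$, $b_{0,0}=0$, $a_{0,k}=b_{0,k}=0$ for $k\ge1$, and for $n\ge1$, $k\ge0$: $a_{n,k}=b_{n-1,k-1}+a_{n-1,k+1}$, $b_{n,k}=a_{n-1,k}+b_{n-1,k+1}$, with $b_{n-1,-1}=0$. ($b_{n,k}$ counts partial S-Motzkin paths of length $n$ ending at height $k$ whose last non-down step is a horizontal step.) Binomial coefficients with negative lower index are $0$. *)

From mathcomp Require Import all_boot all_algebra.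
Set Implicit Arguments. Unset Strict Implicit. Unset Printing Implicit Defensive.

Fixpoint ab (n : nat) : nat -> nat * nat :=
  match n with
  | 0 => fun k => if k == 0 then (1, 0) else (0, 0)
  | n'.+1 => fun k =>
      let bprev := if k is k'.+1 then (ab n' k').2 else 0 in
      (bprev + (ab n' k.+1).1, (ab n' k).1 + (ab n' k.+1).2)
  end.

Definition a_nk (n k : nat) : nat := (ab n k).1.
Definition b_nk (n k : nat) : nat := (ab n k).2.

Definition binZ (n : nat) (j : int) : int :=
  match j with Posz j' => ('C(n, j'))%:Z | Negz _ => 0 end.

From mathcomp Require Import all_boot all_algebra zify ring.
Import GRing.Theory.
Local Open Scope ring_scope.

(* Merge the two families into one table indexed by a single
   "level" d: a_{n,k} sits at level 2k and b_{n,k} at level 2k+1.  The defining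
   recurrences then become the single rule c_{n+1,d+1} = c_{n,d} + c_{n,d+3},
   together with the boundary rule c_{n+1,0} = c_{n,2} (from a_{n+1,0} = a_{n,1}).
   We guess the closed form c_{n,d} = F_n(m) when n = 3m + d (and 0 otherwise),
   where F_n(j) = C(n,j) - 2 C(n,j-1) is a ballot-type difference of binomials.
   F obeys Pascal's rule, which gives the interior recurrence, and the boundary
   rule reduces to the vanishing F_{3m+2}(m+1) = 0.  Induction on n then shows
   that the table of pairs (a,b) agrees with the closed form, and the theorem is
   the odd-level half of this, rewritten with C(n+1,m) = C(n,m) + C(n,m-1). *)

Lemma Posz_succ_sub1 (j : nat) : Posz j.+1 - 1 = Posz j.
Proof. by rewrite -addn1 PoszD addrK. Qed.

Lemma binZS (n : nat) (j : int) : binZ n.+1 j = binZ n j + binZ n (j - 1).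
Proof.
case: j => [[|j]|j] //; first by rewrite /binZ /= !bin0.
by rewrite Posz_succ_sub1 /binZ binS PoszD addrC.
Qed.

Definition ballot (n : nat) (j : int) : int := binZ n j - 2 * binZ n (j - 1).

Lemma ballotS (n : nat) (j : int) : ballot n.+1 j = ballot n j + ballot n (j - 1).
Proof. by rewrite /ballot !binZS; ring. Qed.

Lemma ballotS0 (n : nat) : ballot n.+1 0 = ballot n 0.
Proof. by rewrite ballotS addr0. Qed.

Lemma ballotSS (n m : nat) : ballot n.+1 m.+1 = ballot n m.+1 + ballot n m.
Proof. by rewrite ballotS Posz_succ_sub1. Qed.

(* F_{3m+2}(m+1) = 0, i.e. C(3m+2,m+1) = 2 C(3m+2,m): the two binomials differ
   by the factor (3m+2-m)/(m+1) = 2.  This is what makes the boundary rule hold. *)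
Lemma ballot_vanish (m : nat) : ballot (3 * m + 2) m.+1 = 0.
Proof.
rewrite /ballot Posz_succ_sub1 /binZ.
have ratio := mul_bin_left (3 * m + 2) m.
have -> : 'C(3 * m + 2, m.+1) = (2 * 'C(3 * m + 2, m))%N.
  apply/eqP; rewrite -(eqn_pmul2l (ltn0Sn m)) ratio mulnA.
  by have -> : (3 * m + 2 - m = m.+1 * 2)%N by lia.
by rewrite PoszM subrr.
Qed.

Definition closed_form (n d : nat) : int :=
  if ((d <= n) && ((n - d) %% 3 == 0))%N then ballot n ((n - d) %/ 3)%N else 0.

Lemma closed_form_on (m d : nat) : closed_form (3 * m + d) d = ballot (3 * m + d) m.
Proof.
rewrite /closed_form addnK mulKn // modnMr eqxx andbT.
by rewrite leq_addl.
Qed.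

Lemma closed_form_off (n d : nat) :
  (forall m, n <> (3 * m + d)%N) -> closed_form n d = 0.
Proof.
move=> off; rewrite /closed_form; case: ifP => // /andP [le_dn mod0].
by have := off ((n - d) %/ 3)%N; lia.
Qed.

Lemma closed_form_init (d : nat) : closed_form 0 d = (d == 0%N)%:R.
Proof.
case: d => [|d]; first by rewrite (closed_form_on 0 0).
by apply: closed_form_off; lia.
Qed.

Lemma level_cases (n d : nat) :
  (exists m, n = (3 * m + d)%N) \/ (forall m, n <> (3 * m + d)%N).
Proof.
case: (boolP ((d <= n) && ((n - d) %% 3 == 0))%N) => on.
  by left; exists ((n - d) %/ 3)%N; lia.
by right=> m; lia.
Qed.

Lemma closed_form_step (n d : nat) :
  closed_form n.+1 d.+1 = closed_form n d + closed_form n d.+3.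
Proof.
have [[m ->]|off] := level_cases n d; last first.
  by rewrite !closed_form_off ?addr0 // => m; have := off m.+1; have := off m; lia.
have -> : (3 * m + d).+1 = (3 * m + d.+1)%N by lia.
rewrite !closed_form_on; case: m => [|m].
  by rewrite closed_form_off ?ballotS0 ?addr0 //; lia.
have -> : (3 * m.+1 + d.+1 = (3 * m + d.+3).+1)%N by lia.
have -> : (3 * m.+1 + d = 3 * m + d.+3)%N by lia.
by rewrite closed_form_on ballotSS.
Qed.

(* Boundary recurrence: c_{n+1,0} = c_{n,2}, thanks to the vanishing of F. *)
Lemma closed_form_bottom (n : nat) : closed_form n.+1 0 = closed_form n 2.
Proof.
have [[m Em]|off] := level_cases n 2; last first.
  by rewrite !closed_form_off // => m; have := off m.-1; lia.
have -> : n.+1 = (3 * m.+1 + 0)%N by lia.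
rewrite Em !closed_form_on.
have -> : (3 * m.+1 + 0 = (3 * m + 2).+1)%N by lia.
by rewrite ballotSS ballot_vanish add0r.
Qed.

Lemma a_nk_bottom (n : nat) : a_nk n.+1 0 = a_nk n 1.
Proof. by []. Qed.

Lemma a_nk_step (n k : nat) : a_nk n.+1 k.+1 = (b_nk n k + a_nk n k.+2)%N.
Proof. by []. Qed.

Lemma b_nk_step (n k : nat) : b_nk n.+1 k = (a_nk n k + b_nk n k.+1)%N.
Proof. by []. Qed.

Lemma ab_closed_form (n k : nat) :
  (a_nk n k)%:Z = closed_form n (2 * k) /\ (b_nk n k)%:Z = closed_form n (2 * k).+1.
Proof.
elim: n k => [|n IH] k.
  by rewrite !closed_form_init; case: k.
split.
  case: k => [|k]; first by rewrite a_nk_bottom closed_form_bottom (IH 1%N).1.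
  rewrite a_nk_step PoszD (IH k).2 (IH k.+2).1.
  have -> : (2 * k.+1 = (2 * k).+2)%N by lia.
  have -> : (2 * k.+2 = (2 * k).+4)%N by lia.
  by rewrite closed_form_step.
rewrite b_nk_step PoszD (IH k).1 (IH k.+1).2 closed_form_step.
by have -> : ((2 * k).+3 = (2 * k.+1).+1)%N by lia.
Qed.

Theorem mainTheorem10 (n k : nat) :
  (b_nk n k)%:Z =
  (if ((n %% 3 == (2 * k + 1) %% 3)%N && (2 * k + 1 <= n)%N) then
     let m := ((n - (2 * k + 1)) %/ 3)%N in
     binZ n.+1 m%:Z - 3 * binZ n (m%:Z - 1)
   else 0).
Proof.
rewrite (ab_closed_form n k).2 /closed_form addn1.
have -> : (((2 * k).+1 <= n) && ((n - (2 * k).+1) %% 3 == 0))%N =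
          ((n %% 3 == (2 * k).+1 %% 3) && ((2 * k).+1 <= n))%N.
  by apply/idP/idP; lia.
case: ifP => // _.
by rewrite binZS /ballot; ring.
Qed.
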